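(* Let $\mathcal{Q}\subset\mathcal{E}$ be a smooth embedded submanifold with projection function $\Pi$ for $T\mathcal{Q}$, and embed $T^*\mathcal{Q}=\{(q,p): q\in\mathcal{Q},\ \Pi(q)^{T}p=p\}\subset\mathcal{E}^2$. Fix $(q,p)\in T^*\mathcal{Q}$. For $(h_q,h_p)\in\mathcal{E}^2$ set $$e_q=\Pi(q)h_p,\qquad e_p=\Pi'(q;e_q)^{T}p-\Pi(q)^{T}\big\{h_q+\{X\mapsto\Pi'(q;X)^{T}p\}^{T}h_p\big\}.$$ Then $(e_q,e_p)\in T_{(q,p)}T^*\mathcal{Q}$ and for all $(\xi_q,\xi_p)\in T_{(q,p)}T^*\mathcal{Q}$, $$h_q\cdot\xi_q+h_p\cdot\xi_p=e_q\cdot\xi_p-e_p\cdot\xi_q=\Omega\big((e_q,e_p),(\xi_q,\xi_p)\big).$$ Restricted to $T^*_{(q,p)}T^*\mathcal{Q}=\{(s_q,s_p):\Pi(q)^{T}s_q=s_q,\ \Pi(q)s_p=s_p\}$, the map $(h_q,h_p)\mapsto(e_q,e_p)$ is a bijection onto $T_{(q,p)}T^*\mathcal{Q}$ with inverse $(e_q,e_p)\mapsto(-\Pi(q)^{T}e_p,\ e_q)$; consequently $\Omega$ is nondegenerate on $T_{(q,p)}T^*\mathcal{Q}$ and $(e_q,e_p)$ is the unique element of $T_{(q,p)}T^*\mathcal{Q}$ satisfying the displayed identity. Hence, for a smooth function $H$ on $T^*\mathcal{Q}$ extended smoothly to a neighborhood in $\mathcal{E}^2$ with partial gradients $(H_q,H_p)$,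 the unique vector field $X_H$ on $T^*\mathcal{Q}$ with $\Omega(X_H,Y)=D_YH$ for all vector fields $Y$ on $T^*\mathcal{Q}$ is $$X_H(q,p)=\Big(\Pi(q)H_p,\ \ \Pi'(q;\Pi(q)H_p)^{T}p-\Pi(q)^{T}\big\{H_q+\{X\mapsto\Pi'(q;X)^{T}p\}^{T}H_p\big\}\Big).$$
   Context: $\mathcal{E}$ is a finite-dimensional real inner product space (inner product $a\cdot b$, adjoint $A^{T}$). A projection function for $T\mathcal{Q}$ is a smooth map $\Pi:\mathcal{Q}\to\mathrm{Lin}(\mathcal{E},\mathcal{E})$ with $\Pi(q)^2=\Pi(q)$ and $\mathrm{Im}\,\Pi(q)=T_q\mathcal{Q}$; $\Pi'(q;\xi)$ is its directional derivative. The tangent space of the embedded cotangent bundle is $T_{(q,p)}T^*\mathcal{Q}=\{(\Delta_q,\Delta_p)\in T_q\mathcal{Q}\times\mathcal{E}:\ \Delta_p=\Pi(q)^{T}\Delta_p+\Pi'(q;\Delta_q)^{T}p\}$. The Poincaré 2-form is $\Omega((a,b),(c,d))=a\cdot d-b\cdot c$ (restricted to $T T^*\mathcal{Q}$). Index-raising notation: $\{X\mapsto\Pi'(q;X)^{T}p\}^{T}h$ denotes the unique $\Phi\in T_q\mathcal{Q}$ with $\Delta\cdot\Phi=h\cdot\Pi'(q;\Delta)^{T}p$ for all $\Delta\in T_q\mathcal{Q}$. *)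

From HB Require Import structures.
From mathcomp Require Import all_boot all_order all_algebra.
From mathcomp Require Import all_classical all_reals all_analysis.
Set Implicit Arguments. Unset Strict Implicit. Unset Printing Implicit Defensive.
Import Order.TTheory GRing.Theory Num.Theory.
Import numFieldNormedType.Exports.
Local Open Scope classical_set_scope.
Local Open Scope ring_scope.

(* The ambient Euclidean space E is modelled as column vectors 'cV[R]_n with
   the standard inner product; linear maps E -> E are n x n matrices acting on
   the left, and the adjoint A^T is the matrix transpose. *)
Definition dotv (R : ringType) (n : nat) (u v : 'cV[R]_n) : R := (u^T *m v) 0 0.

Fixpoint iterD (R : realType) (V W : normedModType R) (vs : seq V) (f : V -> W)
  : V -> W :=
  if vs is v :: vs' then (fun x => 'D_v (iterD vs' f) x) else f.

Definition smooth_on (R : realType) (V W : normedModType R) (U : set V)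
    (f : V -> W) : Prop :=
  forall (vs : seq V) (x : V), U x -> differentiable (iterD vs f) x.

Definition tangent_space (R : realType) (n : nat) (Q : set 'cV[R]_n)
    (q v : 'cV[R]_n) : Prop :=
  exists gam : R -> 'cV[R]_n,
    [/\ gam 0 = q, (\forall t \near 0, Q (gam t)),
        derivable gam 0 1 & 'D_1 gam 0 = v].

(* Q is a smooth embedded submanifold of 'cV[R]_n (of some dimension k):
   around each point it is the image of a smooth injective immersion which is
   a homeomorphism onto an open piece Q ∩ U of Q. *)
Definition embedded_submanifold (R : realType) (n : nat) (Q : set 'cV[R]_n)
  : Prop :=
  exists k : nat, forall q, Q q ->
    exists (U : set 'cV[R]_n) (V : set 'cV[R]_k)
           (phi : 'cV[R]_k -> 'cV[R]_n) (psi : 'cV[R]_n -> 'cV[R]_k),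
      [/\ open U, U q, open V, smooth_on V phi & phi @` V = Q `&` U] /\
      [/\ (forall u, V u -> psi (phi u) = u),
          {within Q `&` U, continuous psi} &
          (forall u, V u -> injective (fun w : 'cV[R]_k => 'D_w phi u))].

(* Projection function for TQ: Pi is smooth (on an open neighbourhood of Q,
   i.e. it is given together with a smooth extension), and at each q in Q,
   Pi q is idempotent with image T_q Q. *)
Definition projection_function (R : realType) (n : nat) (Q : set 'cV[R]_n)
    (Pi : 'cV[R]_n -> 'M[R]_n) : Prop :=
  (exists U : set 'cV[R]_n, [/\ open U, Q `<=` U & smooth_on U Pi]) /\
  (forall q, Q q ->
     Pi q *m Pi q = Pi q /\
     (forall v, (exists w, v = Pi q *m w) <-> tangent_space Q q v)).

Definition Pid (R : realType) (n : nat) (Pi : 'cV[R]_n -> 'M[R]_n)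
    (q xi : 'cV[R]_n) : 'M[R]_n := 'D_xi Pi q.

Definition Tstar (R : realType) (n : nat) (Q : set 'cV[R]_n)
    (Pi : 'cV[R]_n -> 'M[R]_n) : set ('cV[R]_n * 'cV[R]_n) :=
  fun z => Q z.1 /\ (Pi z.1)^T *m z.2 = z.2.

Definition TTstar (R : realType) (n : nat) (Q : set 'cV[R]_n)
    (Pi : 'cV[R]_n -> 'M[R]_n) (q p dq dp : 'cV[R]_n) : Prop :=
  tangent_space Q q dq /\ dp = (Pi q)^T *m dp + (Pid Pi q dq)^T *m p.

Definition Omega (R : ringType) (n : nat) (x y : 'cV[R]_n * 'cV[R]_n) : R :=
  dotv x.1 y.2 - dotv x.2 y.1.

(* Index raising {X |-> Pi'(q;X)^T p}^T h : the unique Phi in T_q Q with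
   Delta . Phi = h . Pi'(q;Delta)^T p for all Delta in T_q Q. *)
Definition raise (R : realType) (n : nat) (Q : set 'cV[R]_n)
    (Pi : 'cV[R]_n -> 'M[R]_n) (q p h : 'cV[R]_n) : 'cV[R]_n :=
  xget 0 [set Phi | tangent_space Q q Phi /\
           forall D, tangent_space Q q D ->
             dotv D Phi = dotv h ((Pid Pi q D)^T *m p)].

Definition ham_e (R : realType) (n : nat) (Q : set 'cV[R]_n)
    (Pi : 'cV[R]_n -> 'M[R]_n) (q p hq hp : 'cV[R]_n)
  : 'cV[R]_n * 'cV[R]_n :=
  let eq := Pi q *m hp in
  (eq, (Pid Pi q eq)^T *m p - (Pi q)^T *m (hq + raise Q Pi q p hp)).

Definition cotS (R : ringType) (n : nat) (Pi : 'cV[R]_n -> 'M[R]_n)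
    (q : 'cV[R]_n) : set ('cV[R]_n * 'cV[R]_n) :=
  fun s => (Pi q)^T *m s.1 = s.1 /\ Pi q *m s.2 = s.2.

Definition vector_field (R : realType) (n : nat) (Q : set 'cV[R]_n)
    (Pi : 'cV[R]_n -> 'M[R]_n)
    (X : 'cV[R]_n * 'cV[R]_n -> 'cV[R]_n * 'cV[R]_n) : Prop :=
  forall z, Tstar Q Pi z -> TTstar Q Pi z.1 z.2 (X z).1 (X z).2.

Definition gradq (R : realType) (n : nat) (H : 'cV[R]_n * 'cV[R]_n -> R)
    (z : 'cV[R]_n * 'cV[R]_n) : 'cV[R]_n :=
  \col_i 'D_((delta_mx i 0 : 'cV[R]_n), (0 : 'cV[R]_n)) H z.
Definition gradp (R : realType) (n : nat) (H : 'cV[R]_n * 'cV[R]_n -> R)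
    (z : 'cV[R]_n * 'cV[R]_n) : 'cV[R]_n :=
  \col_i 'D_((0 : 'cV[R]_n), (delta_mx i 0 : 'cV[R]_n)) H z.

From HB Require Import structures.
From mathcomp Require Import all_boot all_order all_algebra.
From mathcomp Require Import all_classical all_reals all_analysis.
From mathcomp Require Import ring lra.
Import Order.TTheory GRing.Theory Num.Theory.
Import numFieldNormedType.Exports.
Local Open Scope classical_set_scope.
Local Open Scope ring_scope.
Set Implicit Arguments. Unset Strict Implicit.

(* Differentiating [Pi(q)^2 = Pi(q)] along curves in [Q] gives
   [Pi(q) Pi'(q;a) Pi(q) = 0] for every tangent vector [a].  For a covector
   [p = Pi(q)^T p] this yields [Pi(q)^T Pi'(q;a)^T p = 0], which makes
   [(e_q, e_p)] tangent to [T*Q], and [p . Pi'(q;a) xi = 0] for tangent [a], [xi],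
   which kills the cross terms when [Omega((e_q, e_p), xi)] is expanded, leaving
   [h . xi].  Omega is nondegenerate on [T T*Q] (test against vertical and
   horizontal vectors), whence uniqueness and the inverse map; [X_H] is the case
   [h = grad H], and its uniqueness among vector fields follows by testing
   against fields supported at a single point. *)

Section InnerProduct.
Variables (R : comRingType) (n : nat).
Implicit Types (u v w : 'cV[R]_n) (A : 'M[R]_n).

Lemma dotvE u v : dotv u v = \sum_i u i 0 * v i 0.
Proof. by rewrite /dotv !mxE; apply: eq_bigr => i _; rewrite mxE. Qed.

Lemma dotvC u v : dotv u v = dotv v u.
Proof. by rewrite !dotvE; apply: eq_bigr => i _; rewrite mulrC. Qed.

Lemma dotvDl u v w : dotv (u + v) w = dotv u w + dotv v w.
Proof. by rewrite !dotvE -big_split; apply: eq_bigr => i _; rewrite mxE mulrDl. Qed.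

Lemma dotvBl u v w : dotv (u - v) w = dotv u w - dotv v w.
Proof. by rewrite !dotvE -sumrB; apply: eq_bigr => i _; rewrite !mxE mulrBl. Qed.

Lemma dotv0l w : dotv 0 w = 0.
Proof. by rewrite dotvE big1 // => i _; rewrite mxE mul0r. Qed.

Lemma dotvDr u v w : dotv w (u + v) = dotv w u + dotv w v.
Proof. by rewrite !(dotvC w) dotvDl. Qed.

Lemma dotvBr u v w : dotv w (u - v) = dotv w u - dotv w v.
Proof. by rewrite !(dotvC w) dotvBl. Qed.

Lemma dotv0r w : dotv w 0 = 0.
Proof. by rewrite dotvC dotv0l. Qed.

Lemma dotvZr k u w : dotv w (k *: u) = k * dotv w u.
Proof. by rewrite !dotvE mulr_sumr; apply: eq_bigr => i _; rewrite mxE mulrCA. Qed.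

Lemma dotv_mulmxl A u v : dotv (A *m u) v = dotv u (A^T *m v).
Proof. by rewrite /dotv trmx_mul mulmxA. Qed.

Lemma dotv_mulmxr A u v : dotv u (A *m v) = dotv (A^T *m u) v.
Proof. by rewrite /dotv trmx_mul trmxK mulmxA. Qed.

Lemma dotv_linear_functional (g : 'cV[R]_n -> R) :
  {morph g : u v / u + v} -> (forall k u, g (k *: u) = k * g u) ->
  forall v, g v = dotv v (\col_i g (delta_mx i 0)).
Proof.
move=> gD gZ v; have g0 : g 0 = 0 by rewrite -(scale0r 0) gZ mul0r.
rewrite dotvE {1}(matrix_sum_delta v) (big_morph g gD g0).
by apply: eq_bigr => i _; rewrite big_ord1 gZ mxE.
Qed.

End InnerProduct.

Section RealInnerProduct.
Variables (R : realFieldType) (n : nat).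
Implicit Types (u v w : 'cV[R]_n) (P : 'M[R]_n).

Lemma dotvv_ge0 u : 0 <= dotv u u.
Proof. by rewrite dotvE sumr_ge0 // => i _; rewrite -expr2 sqr_ge0. Qed.

Lemma dotvv_eq0 u : (dotv u u == 0) = (u == 0).
Proof.
apply/eqP/eqP => [|->]; last exact: dotv0l.
rewrite dotvE => /psumr_eq0P uu0; apply/matrixP => i j; rewrite (ord1 j) mxE.
apply/eqP; rewrite -[_ == 0]orbb -mulf_eq0; apply/eqP/uu0 => // k _.
by rewrite -expr2 sqr_ge0.
Qed.

Lemma dotv_eq0 u : (forall w, dotv u w = 0) -> u = 0.
Proof. by move=> u0; apply/eqP; rewrite -dotvv_eq0 u0. Qed.

(* The matrix is symmetric and [y^T M y = |P y|^2 + |y - P y|^2]. *)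
Lemma gram_complement_unitmx P :
  P^T *m P + (1%:M - P)^T *m (1%:M - P) \in unitmx.
Proof.
set M := _ + _; have Msym : M^T = M by rewrite /M linearD /= !trmx_mul !trmxK.
rewrite -unitmx_tr -row_free_unit Msym; apply: inj_row_free => v vM0.
apply: trmx_inj; rewrite trmx0; set y := v^T.
have : dotv y (M *m y) = 0 by rewrite -Msym -trmx_mul vM0 trmx0 dotv0r.
rewrite mulmxDl dotvDr -!mulmxA (dotv_mulmxr P^T) (dotv_mulmxr (1%:M - P)^T) !trmxK => /eqP.
rewrite paddr_eq0 ?dotvv_ge0 // !dotvv_eq0 => /andP[/eqP Py0].
by rewrite mulmxBl mul1mx Py0 subr0 => /eqP.
Qed.

(* The witness is [P M^-1 P^T c] with [M] as in [gram_complement_unitmx]: [P^T M = P^T P]. *)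
Lemma idem_trmx_range P (c : 'cV[R]_n) : P *m P = P ->
  exists2 x, P *m x = x & P^T *m x = P^T *m c.
Proof.
move=> PP; set M := P^T *m P + (1%:M - P)^T *m (1%:M - P).
have PM : P^T *m M = P^T *m P.
  rewrite mulmxDr !mulmxA -!trmx_mul PP mulmxBl mul1mx PP subrr trmx0 mul0mx.
  exact: addr0.
pose w := invmx M *m (P^T *m c).
exists (P *m w); first by rewrite mulmxA PP.
rewrite mulmxA -PM -mulmxA mulKVmx ?gram_complement_unitmx //.
by rewrite mulmxA -trmx_mul PP.
Qed.

End RealInnerProduct.

Lemma derive_mulmx (R : realFieldType) (V : normedModType R) (m k l : nat)
    (F : V -> 'M[R]_(m, k)) (G : V -> 'M[R]_(k, l)) x v :
  derivable F x v -> derivable G x v ->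
  'D_v (fun y => F y *m G y) x = F x *m 'D_v G x + 'D_v F x *m G x.
Proof.
move=> dF dG; have /derivable_mxP dFij := dF; have /derivable_mxP dGij := dG.
have FGE i j : (fun y => (F y *m G y) i j) =
    \sum_(r < k) ((fun y => F y i r) * (fun y => G y r j)).
  by rewrite fct_sumE; apply/funext => y; rewrite mxE.
have dFG i j r : derivable ((fun y => F y i r) * (fun y => G y r j)) x v.
  exact: derivableM.
have dFGx : derivable (fun y => F y *m G y) x v.
  by apply/derivable_mxP => i j; rewrite FGE; exact: derivable_sum.
rewrite (derive_mx dFGx) (derive_mx dF) (derive_mx dG).
apply/matrixP => i j; rewrite !mxE FGE derive_sum //.
transitivity (\sum_(r < k) (F x i r * 'D_v (fun y => G y r j) x +
                            'D_v (fun y => F y i r) x * G x r j)).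
  by apply: eq_bigr => r _; rewrite deriveM //; congr (_ + _); exact: mulrC.
by rewrite big_split; congr (_ + _); apply: eq_bigr => r _; rewrite !mxE.
Qed.

Lemma derive_grad (R : realType) n (H : 'cV[R]_n * 'cV[R]_n -> R) z v :
  differentiable H z -> 'D_v H z = dotv (gradq H z) v.1 + dotv (gradp H z) v.2.
Proof.
move=> dH; rewrite deriveE //; set f := 'd H z.
pose g1 u := f (u, 0); pose g2 u := f (0, u).
have -> : f v = g1 v.1 + g2 v.2.
  rewrite -linearD; congr (f _).
  by case: v => a b; apply/pair_equal_spec; rewrite /= addr0 add0r.
have g1D : {morph g1 : u w / u + w}.
  by move=> u w; rewrite /g1 -linearD; congr (f _); apply/pair_equal_spec; rewrite /= addr0.
have g2D : {morph g2 : u w / u + w}.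
  by move=> u w; rewrite /g2 -linearD; congr (f _); apply/pair_equal_spec; rewrite /= addr0.
have g1Z k u : g1 (k *: u) = k * g1 u.
  by rewrite /g1 -linearZ; congr (f _); apply/pair_equal_spec; rewrite /= scaler0.
have g2Z k u : g2 (k *: u) = k * g2 u.
  by rewrite /g2 -linearZ; congr (f _); apply/pair_equal_spec; rewrite /= scaler0.
rewrite (dotv_linear_functional g1D g1Z) (dotv_linear_functional g2D g2Z).
rewrite (dotvC (gradq H z)) (dotvC (gradp H z)).
by congr (_ + _); congr (dotv _ _); apply/matrixP => i j; rewrite !mxE deriveE.
Qed.

Section ProjectionFunction.
Variables (R : realType) (n : nat) (Q : set 'cV[R]_n) (Pi : 'cV[R]_n -> 'M[R]_n).
Hypothesis hPi : projection_function Q Pi.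
Implicit Types (p a aq ap bq bp h hq hp v w xi xq xp : 'cV[R]_n).

Lemma Pi_differentiable q : Q q -> differentiable Pi q.
Proof. by have [[U [_ QU sPi]] _] := hPi => Qq; exact: (sPi [::] q (QU _ Qq)). Qed.

Lemma Pi_idem q : Q q -> Pi q *m Pi q = Pi q.
Proof. by have [_ PiQ] := hPi => /PiQ[]. Qed.

Lemma tangent_spaceP q : Q q -> forall v, tangent_space Q q v <-> Pi q *m v = v.
Proof.
move=> Qq v; have [_ /(_ q Qq)[_ imPi]] := hPi.
split=> [/imPi[w ->]|Pv]; first by rewrite mulmxA Pi_idem.
by apply/imPi; exists v.
Qed.

Section BasePoint.
Variable q : 'cV[R]_n.
Hypothesis Qq : Q q.

Lemma tangent_Pi w : tangent_space Q q (Pi q *m w).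
Proof. by apply/(tangent_spaceP Qq); rewrite mulmxA Pi_idem. Qed.

Lemma trPi_idem w : (Pi q)^T *m ((Pi q)^T *m w) = (Pi q)^T *m w.
Proof. by rewrite mulmxA -trmx_mul Pi_idem. Qed.

Lemma PidE : Pid Pi q =1 'd Pi q.
Proof. by move=> v; rewrite /Pid deriveE //; exact: Pi_differentiable. Qed.

Lemma Pid_idem a : tangent_space Q q a ->
  Pi q *m Pid Pi q a + Pid Pi q a *m Pi q = Pid Pi q a.
Proof.
move=> [gam [g0 gamQ dgam Dgam]].
have dPi : differentiable Pi (gam 0) by rewrite g0; exact: Pi_differentiable.
have dgam' : differentiable gam 0 by apply/derivable1_diffP.
have dPig : differentiable (Pi \o gam) 0 by exact: differentiable_comp.
have DPig : 'D_1 (Pi \o gam) 0 = Pid Pi q a.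
  by rewrite deriveE // diff_comp // /= -(deriveE _ dgam') Dgam g0 -PidE.
have dPig1 : derivable (Pi \o gam) 0 1 by exact: diff_derivable.
have := derive_mulmx dPig1 dPig1.
rewrite DPig /= g0 => <-; rewrite -DPig; apply: near_eq_derive.
by apply: filterS gamQ => t /Pi_idem.
Qed.

Lemma Pi_Pid_Pi a : tangent_space Q q a -> Pi q *m Pid Pi q a *m Pi q = 0.
Proof.
move=> /Pid_idem PD; have PP := Pi_idem Qq.
have : Pi q *m (Pi q *m Pid Pi q a + Pid Pi q a *m Pi q) = Pi q *m Pid Pi q a.
  by rewrite PD.
by rewrite mulmxDr !mulmxA PP => /(canRL (addKr _)); rewrite addNr.
Qed.

(* The choice made by [raise] is not the default one: lift the representative
   of [D |-> h . Pi'(q;D)^T p] into [T_q Q] with [idem_trmx_range]. *)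
Lemma raise_spec p h :
  tangent_space Q q (raise Q Pi q p h) /\
  forall D, tangent_space Q q D ->
    dotv D (raise Q Pi q p h) = dotv h ((Pid Pi q D)^T *m p).
Proof.
rewrite /raise; set S := (X in xget 0 X).
suff [x Sx] : exists x, S x by exact: (xgetPex 0 (ex_intro _ x Sx)).
pose g D := dotv h ((Pid Pi q D)^T *m p).
have gD : {morph g : u v / u + v}.
  by move=> u v; rewrite /g !PidE linearD /= linearD /= mulmxDl dotvDr.
have gZ k u : g (k *: u) = k * g u.
  by rewrite /g !PidE linearZ /= linearZ /= -scalemxAl dotvZr.
have [x Px PTx] := idem_trmx_range (\col_i g (delta_mx i 0)) (Pi_idem Qq).
exists x; split; first exact/(tangent_spaceP Qq).
move=> D /(tangent_spaceP Qq) PD.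
by rewrite -/(g D) (dotv_linear_functional gD gZ) -PD !dotv_mulmxl PTx.
Qed.

Lemma TTstar0 p : TTstar Q Pi q p 0 0.
Proof.
split; first by apply/(tangent_spaceP Qq); rewrite mulmx0.
by rewrite /Pid derive0 trmx0 !mul0mx mulmx0 addr0.
Qed.

Variable p : 'cV[R]_n.
Hypothesis cot_p : (Pi q)^T *m p = p.

Lemma trPi_trPid a : tangent_space Q q a -> (Pi q)^T *m ((Pid Pi q a)^T *m p) = 0.
Proof.
move=> /Pi_Pid_Pi PDP.
by rewrite -cot_p !mulmxA -!trmx_mul mulmxA PDP trmx0 mul0mx.
Qed.

Lemma dotv_Pid_tangent a xi : tangent_space Q q a -> tangent_space Q q xi ->
  dotv p (Pid Pi q a *m xi) = 0.
Proof.
move=> ta /(tangent_spaceP Qq) <-.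
by rewrite !dotv_mulmxr trPi_trPid // dotv0l.
Qed.

Lemma trPi_raise h : tangent_space Q q h -> (Pi q)^T *m raise Q Pi q p h = 0.
Proof.
move=> th; have [_ raiseD] := raise_spec p h.
apply: dotv_eq0 => w; rewrite -dotv_mulmxr dotvC (raiseD _ (tangent_Pi w)).
by rewrite dotvC dotv_mulmxl trmxK (dotv_Pid_tangent (tangent_Pi w) th).
Qed.

Lemma ham_e_tangent hq hp :
  TTstar Q Pi q p (ham_e Q Pi q p hq hp).1 (ham_e Q Pi q p hq hp).2.
Proof.
split; first exact: tangent_Pi.
by rewrite /= mulmxBr (trPi_trPid (tangent_Pi hp)) sub0r trPi_idem addrC.
Qed.

Lemma ham_e_Omega hq hp xq xp : TTstar Q Pi q p xq xp ->
  dotv hq xq + dotv hp xp = Omega (ham_e Q Pi q p hq hp) (xq, xp).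
Proof.
move=> [txq exp]; have [_ raiseD] := raise_spec p hp.
have Pxq := (tangent_spaceP Qq _).1 txq.
have Pxp : (Pi q)^T *m xp = xp - (Pid Pi q xq)^T *m p by rewrite {2}exp addrK.
rewrite /Omega /= dotv_mulmxl Pxp dotvBl dotv_mulmxl trmxK.
rewrite (dotv_Pid_tangent (tangent_Pi hp) txq) dotv_mulmxl trmxK Pxq dotvDl.
by rewrite (dotvC (raise _ _ _ _ _)) raiseD // dotvBr; ring.
Qed.

Lemma TTstarB aq ap bq bp : TTstar Q Pi q p aq ap -> TTstar Q Pi q p bq bp ->
  TTstar Q Pi q p (aq - bq) (ap - bp).
Proof.
move=> [/(tangent_spaceP Qq) ta ea] [/(tangent_spaceP Qq) tb eb]; split.
  by apply/(tangent_spaceP Qq); rewrite mulmxBr ta tb.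
rewrite PidE (linearB ('d Pi q)) -!PidE mulmxBr linearB mulmxBl {1}ea {1}eb.
by rewrite opprD addrACA.
Qed.

(* Test against the vertical vectors [(0, Pi^T w)] and the horizontal lifts
   [(Pi w, Pi'(q; Pi w)^T p)] of [T_q Q]. *)
Lemma Omega_nondegenerate e : TTstar Q Pi q p e.1 e.2 ->
  (forall xq xp, TTstar Q Pi q p xq xp -> Omega e (xq, xp) = 0) -> e = (0, 0).
Proof.
case: e => e1 e2 [/= /(tangent_spaceP Qq) Pe1 ee2] Omega0.
have e1_0 : e1 = 0.
  apply: dotv_eq0 => w; rewrite -Pe1 dotv_mulmxl.
  have vert : TTstar Q Pi q p 0 ((Pi q)^T *m w).
    split; first by apply/(tangent_spaceP Qq); rewrite mulmx0.
    by rewrite /Pid derive0 trmx0 mul0mx addr0 trPi_idem.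
  by have := Omega0 _ _ vert; rewrite /Omega /= dotv0r subr0.
have trPi_e2 : (Pi q)^T *m e2 = 0.
  apply: dotv_eq0 => w; rewrite dotv_mulmxl trmxK.
  have hor : TTstar Q Pi q p (Pi q *m w) ((Pid Pi q (Pi q *m w))^T *m p).
    by split; [exact: tangent_Pi | rewrite (trPi_trPid (tangent_Pi w)) add0r].
  have := Omega0 _ _ hor; rewrite /Omega /= e1_0 dotv0l sub0r => /eqP.
  by rewrite oppr_eq0 => /eqP.
by rewrite ee2 trPi_e2 e1_0 /Pid derive0 trmx0 mul0mx addr0.
Qed.

Lemma ham_e_unique hq hp e : TTstar Q Pi q p e.1 e.2 ->
  (forall xq xp, TTstar Q Pi q p xq xp ->
     dotv hq xq + dotv hp xp = Omega e (xq, xp)) ->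
  e = ham_e Q Pi q p hq hp.
Proof.
case: e => e1 e2 /= te He; set f := ham_e Q Pi q p hq hp.
have : (e1 - f.1, e2 - f.2) = (0, 0).
  apply: (Omega_nondegenerate (e := (_, _)) (TTstarB te (ham_e_tangent hq hp))).
  move=> xq xp tx.
  by move: (He _ _ tx); rewrite (ham_e_Omega hq hp tx) /Omega /= !dotvBl => E; lra.
by move=> [/eqP + /eqP]; rewrite !subr_eq0 => /eqP -> /eqP ->.
Qed.

Lemma ham_e_cotS_inv s : cotS Pi q s ->
  (- ((Pi q)^T *m (ham_e Q Pi q p s.1 s.2).2), (ham_e Q Pi q p s.1 s.2).1) = s.
Proof.
case: s => s1 s2 [/= Ps1 Ps2]; congr (_, _); last exact: Ps2.
have ts2 : tangent_space Q q s2 by apply/(tangent_spaceP Qq).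
rewrite mulmxBr (trPi_trPid (tangent_Pi s2)) sub0r opprK trPi_idem mulmxDr.
by rewrite trPi_raise // addr0.
Qed.

Lemma ham_e_inv_cotS e : TTstar Q Pi q p e.1 e.2 ->
  cotS Pi q (- ((Pi q)^T *m e.2), e.1) /\
  ham_e Q Pi q p (- ((Pi q)^T *m e.2)) e.1 = e.
Proof.
case: e => e1 e2 [/= te1 ee2]; have Pe1 := (tangent_spaceP Qq _).1 te1.
split; first by split; rewrite //= mulmxN trPi_idem.
rewrite /ham_e /= Pe1 mulmxDr (trPi_raise te1) addr0 mulmxN opprK trPi_idem.
by rewrite addrC -ee2.
Qed.

End BasePoint.

Lemma vector_field_at z xq xp : TTstar Q Pi z.1 z.2 xq xp ->
  exists2 Y, vector_field Q Pi Y & Y z = (xq, xp).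
Proof.
move=> tx; exists (fun y : 'cV[R]_n * 'cV[R]_n => if y == z then (xq, xp) else 0);
  last by rewrite eqxx.
by move=> y [Qy _]; case: eqP => [-> //|_]; exact: TTstar0.
Qed.

Lemma ham_e_grad_Omega (H : 'cV[R]_n * 'cV[R]_n -> R) z Y :
  Tstar Q Pi z -> differentiable H z -> TTstar Q Pi z.1 z.2 Y.1 Y.2 ->
  Omega (ham_e Q Pi z.1 z.2 (gradq H z) (gradp H z)) Y = 'D_Y H z.
Proof.
by move=> [Qz cot_z] dH tY; rewrite derive_grad //; symmetry; exact: ham_e_Omega.
Qed.

End ProjectionFunction.

Theorem mainTheorem6 (R : realType) (n : nat) (Q : set 'cV[R]_n)
    (Pi : 'cV[R]_n -> 'M[R]_n) :
  embedded_submanifold Q -> projection_function Q Pi ->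
  (forall q p : 'cV[R]_n, Tstar Q Pi (q, p) ->
     (forall hq hp : 'cV[R]_n,
        let e := ham_e Q Pi q p hq hp in
        TTstar Q Pi q p e.1 e.2 /\
        (forall xq xp, TTstar Q Pi q p xq xp ->
           dotv hq xq + dotv hp xp = dotv e.1 xp - dotv e.2 xq /\
           dotv e.1 xp - dotv e.2 xq = Omega e (xq, xp))) /\
     (forall s, cotS Pi q s ->
        let e := ham_e Q Pi q p s.1 s.2 in
        TTstar Q Pi q p e.1 e.2 /\ (- ((Pi q)^T *m e.2), e.1) = s) /\
     (forall e : 'cV[R]_n * 'cV[R]_n, TTstar Q Pi q p e.1 e.2 ->
        cotS Pi q (- ((Pi q)^T *m e.2), e.1) /\
        ham_e Q Pi q p (- ((Pi q)^T *m e.2)) e.1 = e) /\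
     (forall e : 'cV[R]_n * 'cV[R]_n, TTstar Q Pi q p e.1 e.2 ->
        (forall xq xp, TTstar Q Pi q p xq xp -> Omega e (xq, xp) = 0) ->
        e = (0, 0)) /\
     (forall (hq hp : 'cV[R]_n) (e' : 'cV[R]_n * 'cV[R]_n),
        TTstar Q Pi q p e'.1 e'.2 ->
        (forall xq xp, TTstar Q Pi q p xq xp ->
           dotv hq xq + dotv hp xp = Omega e' (xq, xp)) ->
        e' = ham_e Q Pi q p hq hp)) /\
  (forall (H : 'cV[R]_n * 'cV[R]_n -> R) (W : set ('cV[R]_n * 'cV[R]_n)),
     open W -> Tstar Q Pi `<=` W -> smooth_on W H ->
     let XH := fun z : 'cV[R]_n * 'cV[R]_n =>
       (Pi z.1 *m gradp H z,
        (Pid Pi z.1 (Pi z.1 *m gradp H z))^T *m z.2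
        - (Pi z.1)^T *m (gradq H z + raise Q Pi z.1 z.2 (gradp H z))) in
     vector_field Q Pi XH /\
     (forall Y, vector_field Q Pi Y ->
        forall z, Tstar Q Pi z -> Omega (XH z) (Y z) = 'D_(Y z) H z) /\
     (forall X, vector_field Q Pi X ->
        (forall Y, vector_field Q Pi Y ->
           forall z, Tstar Q Pi z -> Omega (X z) (Y z) = 'D_(Y z) H z) ->
        forall z, Tstar Q Pi z -> X z = XH z)).
Proof.
move=> _ hPi; split=> [q p [/= Qq cot_p] | H W _ TW sH XH].
  split=> [hq hp|].
    split=> [|xq xp tx]; first exact: ham_e_tangent.
    by rewrite (ham_e_Omega hPi Qq cot_p _ _ tx).
  split=> [s cs|]; first by split; [exact: ham_e_tangent | exact: ham_e_cotS_inv].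
  split=> [e te|]; first exact: ham_e_inv_cotS.
  by split=> [e|hq hp e]; [exact: Omega_nondegenerate | exact: ham_e_unique].
have dH z : Tstar Q Pi z -> differentiable H z by move=> Tz; exact: (sH [::] z (TW _ Tz)).
split=> [z [Qz cot_z]|]; first exact: ham_e_tangent.
split=> [Y vY z Tz|X vX XOmega z Tz]; first exact: ham_e_grad_Omega (dH _ Tz) (vY _ Tz).
have [Qz cot_z] := Tz; apply: ham_e_unique => // [|xq xp tx]; first exact: vX.
have [Y vY Yz] := vector_field_at hPi tx.
by rewrite -Yz XOmega // (derive_grad _ (dH _ Tz)) Yz.
Qed.
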